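(* Let $\psi(t,b_1,b_3)$ be a function satisfying, for all values of its arguments, (R1) $\psi(qt,b_1,b_3)=b_1\psi(t,b_1,b_3)+(1-b_1)\psi(qt,b_1/q,b_3)$, (R2) $b_3\psi(qt,b_1,b_3)=\psi(t,b_1,b_3)+(b_3-1)\psi(t,b_1,qb_3)$, (R3) $qtb_1b_3\psi(qt,b_1,b_3)=(qtb_1-1)\psi(t,b_1,b_3)+\psi(t,qb_1,b_3)$, (R4) $qt\psi(qt,b_1,b_3)=(qtb_1-1)\psi(t,b_1,b_3)+\psi(qt,b_1,b_3/q)$. Fix $b_1,b_3$ and define $$f(t)=qtb_3(1-b_1)\frac{\psi(qt,b_1/q,qb_3)}{\psi(t,b_1,qb_3)},\qquad g(t)=-\frac{\psi(t,b_1,b_3)}{\psi(t,b_1,qb_3)}.$$ Then $(f,g)$ is a solution of dP$(A_4^{(1)})[b_1,1,b_3]$, i.e. of the system below with $b_2=1$.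
   Context: $q$ is a fixed nonzero complex constant (generic, e.g. not a root of unity); all parameters are generic so that all denominators appearing are nonzero. For parameters $b_1,b_2,b_3$, the equation dP$(A_4^{(1)})[b_1,b_2,b_3]$ is the system for functions $f(t),g(t)$, with $\overline{f}=f(qt)$, $\overline{g}=g(qt)$ and $s=s(t)=\frac{1}{qb_1b_2b_3t}$: $$\overline{g}\,g=\frac{qt}{b_2}\,\frac{(f+b_3)(f+1)}{f+1/s},\qquad \overline{f}\,f=\frac{1}{s}\,\frac{(\overline{g}+1/b_2)(\overline{g}+1/(b_1b_2))}{\overline{g}+qt/b_2},$$ required to hold for all $t$. *)

From HB Require Import structures.
From mathcomp Require Import all_boot all_order all_algebra.
Set Implicit Arguments. Unset Strict Implicit. Unset Printing Implicit Defensive.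
Import Order.TTheory GRing.Theory Num.Theory.
Local Open Scope ring_scope.

Definition dP_s {C : fieldType} (q b1 b2 b3 t : C) : C := 1 / (q * b1 * b2 * b3 * t).

Definition dPA4_eqs {C : fieldType} (q b1 b2 b3 : C) (f g : C -> C) (t : C) : Prop :=
  let s := dP_s q b1 b2 b3 t in
  g (q * t) * g t = (q * t / b2) * ((f t + b3) * (f t + 1) / (f t + 1 / s)) /\
  f (q * t) * f t =
    (1 / s) * ((g (q * t) + 1 / b2) * (g (q * t) + 1 / (b1 * b2)) / (g (q * t) + q * t / b2)).

From HB Require Import structures.
From mathcomp Require Import all_boot all_order all_algebra.
From mathcomp Require Import ring.
Import Order.TTheory GRing.Theory Num.Theory.
Set Implicit Arguments. Unset Strict Implicit. Unset Printing Implicit Defensive.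
Local Open Scope ring_scope.

(* Put u(t) = psi(qt,b1,qb3) / psi(t,b1,qb3).  The contiguity relations R1, R2, R4
   express f and g through u alone: f(t) = q t b3 (u(t) - b1) and f + g = -1, and
   they turn u into a solution of the Riccati-type recursion
     q^2 t b3 (u(qt) - b1) = q t - 1 - (q t b1 - 1) / u(t).
   With b2 = 1 both equations of dP(A_4^(1)) are then rational identities in u(t). *)

Section ContiguityRelations.

Variables (C : fieldType) (q : C) (psi : C -> C -> C -> C).
Hypothesis hq : q != 0.
Hypothesis R1 : forall t x y, psi (q * t) x y = x * psi t x y + (1 - x) * psi (q * t) (x / q) y.
Hypothesis R2 : forall t x y, y * psi (q * t) x y = psi t x y + (y - 1) * psi t x (q * y).
Hypothesis R4 : forall t x y,
  q * t * psi (q * t) x y = (q * t * x - 1) * psi t x y + psi (q * t) x (y / q).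

Lemma mulKq (y : C) : q * y / q = y.
Proof. by rewrite mulrC mulKf. Qed.

Lemma shift_b1_ratio t x y : psi t x y != 0 ->
  (1 - x) * (psi (q * t) (x / q) y / psi t x y) = psi (q * t) x y / psi t x y - x.
Proof. by move=> hB; rewrite (R1 t x y); field. Qed.

Lemma lower_b3_ratio t x y : psi t x (q * y) != 0 ->
  psi t x y / psi t x (q * y)
  = q * t * y * (psi (q * t) x (q * y) / psi t x (q * y)) - (q * t * x * y - 1).
Proof.
move=> hB; have e4 := R4 t x (q * y); rewrite mulKq in e4.
have -> : psi t x y = y * psi (q * t) x y - (y - 1) * psi t x (q * y).
  by rewrite (R2 t x y); ring.
have -> : psi (q * t) x y = q * t * psi (q * t) x (q * y) - (q * t * x - 1) * psi t x (q * y).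
  by rewrite e4; ring.
by field.
Qed.

Lemma ratio_riccati t x y : psi t x (q * y) != 0 -> psi (q * t) x (q * y) != 0 ->
  q * (q * t) * y * (psi (q * (q * t)) x (q * y) / psi (q * t) x (q * y) - x)
  = q * t - 1 - (q * t * x - 1) / (psi (q * t) x (q * y) / psi t x (q * y)).
Proof.
move=> hB hD.
have e4 := R4 (q * t) x (q * y); have e4' := R4 t x (q * y).
rewrite mulKq in e4 e4'.
have key : y * (q * (q * t) * psi (q * (q * t)) x (q * y))
  = (q * (q * t) * x - 1) * y * psi (q * t) x (q * y) + q * t * psi (q * t) x (q * y)
    - (q * t * x - 1) * psi t x (q * y) + (y - 1) * psi (q * t) x (q * y).
  by rewrite e4 mulrDr (R2 (q * t) x y) e4'; ring.
have -> : q * (q * t) * y * (psi (q * (q * t)) x (q * y) / psi (q * t) x (q * y) - x)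
  = (y * (q * (q * t) * psi (q * (q * t)) x (q * y))
     - q * (q * t) * x * y * psi (q * t) x (q * y)) / psi (q * t) x (q * y).
  by field.
by rewrite key; field; rewrite hB hD.
Qed.

End ContiguityRelations.

Lemma dPA4_of_riccati (C : fieldType) (q x y t u : C) (f g : C -> C) :
  q != 0 -> x != 0 -> y != 0 -> t != 0 -> u != 0 ->
  f t = q * t * y * (u - x) -> g t = -1 - f t ->
  f (q * t) = q * t - 1 - (q * t * x - 1) / u -> g (q * t) = -1 - f (q * t) ->
  g (q * t) + q * t / 1 != 0 ->
  dPA4_eqs q x 1 y f g t.
Proof.
move=> hq hx hy ht hu hf hg hfq hgq hden.
have den1 : f t + 1 / dP_s q x 1 y t = q * t * y * u.
  by rewrite hf /dP_s; field; rewrite ht hy hx hq oner_neq0.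
have den2 : g (q * t) + q * t / 1 = (q * t * x - 1) / u.
  by rewrite hgq hfq; field; rewrite hu oner_neq0.
have hqtx : q * t * x - 1 != 0.
  by move: hden; rewrite den2 mulf_eq0 negb_or => /andP[].
rewrite /dPA4_eqs /= den1 den2 hgq hfq hg hf /dP_s.
by split; field; rewrite ?hu ?hqtx ?hx ?hy ?ht ?hq ?oner_neq0.
Qed.

Theorem proposition2p1 (C : numClosedFieldType) (q b1 b3 : C) (psi : C -> C -> C -> C)
  (hq : q != 0) (hb1 : b1 != 0) (hb3 : b3 != 0)
  (R1 : forall t x y, psi (q * t) x y = x * psi t x y + (1 - x) * psi (q * t) (x / q) y)
  (R2 : forall t x y, y * psi (q * t) x y = psi t x y + (y - 1) * psi t x (q * y))
  (R3 : forall t x y, q * t * x * y * psi (q * t) x y = (q * t * x - 1) * psi t x y + psi t (q * x) y)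
  (R4 : forall t x y, q * t * psi (q * t) x y = (q * t * x - 1) * psi t x y + psi (q * t) x (y / q)) :
  let f := fun t => q * t * b3 * (1 - b1) * (psi (q * t) (b1 / q) (q * b3) / psi t b1 (q * b3)) in
  let g := fun t => - (psi t b1 b3 / psi t b1 (q * b3)) in
  forall t : C,
    (* genericity: all denominators occurring in f, g and the system are nonzero *)
    t != 0 ->
    psi t b1 (q * b3) != 0 ->
    psi (q * t) b1 (q * b3) != 0 ->
    f t + 1 / dP_s q b1 1 b3 t != 0 ->
    g (q * t) + q * t / 1 != 0 ->
    dPA4_eqs q b1 1 b3 f g t.
Proof.
move=> f g t ht hB hD _ hden.
pose u s := psi (q * s) b1 (q * b3) / psi s b1 (q * b3).
have fE s : psi s b1 (q * b3) != 0 -> f s = q * s * b3 * (u s - b1).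
  by move=> hs; rewrite /f -mulrA (shift_b1_ratio R1).
have gE s : psi s b1 (q * b3) != 0 -> g s = -1 - f s.
  by move=> hs; rewrite /g (lower_b3_ratio hq R2 R4) // fE // /u; ring.
apply: (dPA4_of_riccati (u := u t)) => //; rewrite ?gE ?fE //.
- by rewrite mulf_neq0 ?invr_neq0.
- exact: ratio_riccati.
Qed.
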